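(* Let $X$ be a finite set and let $\mu,\nu:X\to[0,\infty)$ with $\|\mu\|_1\le1$ and $\|\nu\|_1\le1$. Let $\eta,\delta>0$, let $J(x)=(x+|x|)/2$, and let $\epsilon=\delta/\bigl(2\rho(\eta^{-1},\delta/4,J)\bigr)$. Let $\|\cdot\|$ be a norm on $\mathbb{R}^X$ whose dual norm $\|\cdot\|^*$ is an algebra norm, and suppose $\|\mu-\nu\|\le\epsilon$. Then for every $f$ with $0\le f\le\mu$ there exists $g$ with $0\le g\le(1-\delta)^{-1}\nu$ and $\|f-g\|\le\eta$.
   Context: For functions on $X$: $\langle f,g\rangle=\frac1{|X|}\sum_xf(x)g(x)$, $\|f\|_1=\frac1{|X|}\sum_x|f(x)|$; inequalities between functions are pointwise. The dual norm is $\|\phi\|^*=\max\{\langle f,\phi\rangle:\|f\|\le1\}$. An algebra norm is a norm $N$ with $N(fg)\le N(f)N(g)$ (pointwise product) and $N(\mathbf 1)=1$. For a real polynomial $P(x)=\sum_ka_kx^k$, $R_P(x)=\sum_k|a_k|x^k$; for continuous $J$ and $C,\delta>0$, $\rho(C,\delta,J)$ is twice the infimum of $R_P(C)$ over all real polynomials $P$ with $|P(x)-J(x)|\le\delta$ for all $x\in[-C,C]$. *)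

From HB Require Import structures.
From mathcomp Require Import all_boot all_order all_algebra.
From mathcomp Require Import boolp classical_sets reals.
Set Implicit Arguments. Unset Strict Implicit. Unset Printing Implicit Defensive.
Import Order.TTheory GRing.Theory Num.Theory.
Local Open Scope ring_scope.
Local Open Scope classical_set_scope.

Section Defs.
Variables (R : realType) (X : finType).

Definition ip (f g : X -> R) : R := (#|X|%:R)^-1 * \sum_(x : X) f x * g x.

Definition norm1 (f : X -> R) : R := (#|X|%:R)^-1 * \sum_(x : X) `|f x|.

Definition is_norm (N : (X -> R) -> R) : Prop :=
  [/\ forall f, 0 <= N f,
      forall f, N f = 0 -> f = (fun _ => 0),
      forall (a : R) f, N (fun x => a * f x) = `|a| * N f &
      forall f g, N (fun x => f x + g x) <= N f + N g].

(* dual norm: ||phi||^* = max { <f,phi> : ||f|| <= 1 } (written as a sup;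
   the max is attained by compactness) *)
Definition dual_norm (N : (X -> R) -> R) (phi : X -> R) : R :=
  sup [set ip f phi | f in [set f | N f <= 1]].

Definition is_algebra_norm (M : (X -> R) -> R) : Prop :=
  [/\ is_norm M,
      forall f g, M (fun x => f x * g x) <= M f * M g &
      M (fun _ => 1) = 1].
End Defs.

Section Poly.
Variable R : realType.

Definition RP (p : {poly R}) (x : R) : R :=
  \sum_(k < size p) `|p`_k| * x ^+ k.

Definition rho (C delta : R) (J : R -> R) : R :=
  2 * inf [set RP p C | p in
            [set p : {poly R} | forall x, - C <= x <= C -> `|p.[x] - J x| <= delta]].

Definition Jpos (x : R) : R := (x + `|x|) / 2.
End Poly.

From HB Require Import structures.
From mathcomp Require Import all_boot all_order all_algebra.
From mathcomp Require Import boolp classical_sets reals.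
From mathcomp Require Import topology normedtype derive.
From mathcomp Require Import lra.
Set Implicit Arguments. Unset Strict Implicit. Unset Printing Implicit Defensive.
Import Order.TTheory GRing.Theory Num.Theory.
Import numFieldNormedType.Exports.
Local Open Scope ring_scope.

(* Suppose no [g] with [0 <= g <= nu] lies within [eta] of [f].  The
   [eta]-neighbourhood of this box is compact and convex, so the Euclidean
   projection of [f] onto it gives a separating functional; rescaled by duality,
   it becomes a [psi] with [||psi||^* = 1/eta] and [<f - g, psi> > 1] for every
   [g] in the box.  An algebra norm dominates the sup norm (spectral radius), so
   [psi] takes values in [[-1/eta, 1/eta]], where a polynomial [P] with
   [R_P(1/eta)] close to [rho/2] is [delta/4]-close to [J], and
   [||P(psi)||^* <= R_P(1/eta)].  For [g = nu 1_{psi > 0}] one has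
   [(f - g) psi <= (mu - nu) P(psi) + (mu + nu) delta/4] pointwise, and Hölder's
   inequality [<h, phi> <= ||h|| ||phi||^*] then gives [<f - g, psi> <= delta < 1].
   The argument even yields [g <= nu]. *)

Section RowVectorMinimum.
Variable R : realType.

Lemma coord_le_mx_norm n (v : 'rV[R]_n) i : `|v ord0 i| <= `|v|.
Proof.
by rewrite [leRHS]/Num.norm /= mx_normrE; exact: (le_bigmax 0 (fun ij => `|v ij.1 ij.2|) (ord0, i)).
Qed.

Lemma continuous_locally_lipschitz_rV n (F : 'rV[R]_n -> R) :
  (forall v, exists2 L, 0 <= L &
     forall w, `|v - w| <= 1 -> `|F v - F w| <= L * `|v - w|) ->
  continuous F.
Proof.
move=> HF v; have [L L0 HL] := HF v.
apply/(@cvgrPdist_lt _ _ _ (nbhs v) (nbhs_filter v)) => e e0.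
have L1 : 0 < L + 1 by rewrite ltr_wpDl.
apply/nbhs_ballP; exists (Num.min 1 (e / (L + 1))) => /=.
  by rewrite lt_min ltr01 divr_gt0.
move=> w; rewrite -ball_normE /= lt_min ltr_pdivlMr // => /andP[w1 we].
apply: le_lt_trans (HL w (ltW w1)) _; apply: le_lt_trans we.
by rewrite mulrC ler_wpM2l // lerDl.
Qed.
End RowVectorMinimum.

Section FiniteDimensionalMinimum.
Local Open Scope classical_set_scope.
Variables (R : realType) (X : finType).

Definition locally_lipschitz (F : (X -> R) -> R) := forall h, exists L, forall h',
  (forall x, `|h x - h' x| <= 1) -> `|F h - F h'| <= L * \sum_x `|h x - h' x|.

(* [X -> R] is identified with ['rV_#|X|] through [enum_rank]; the set
   [G <= 0] is closed and bounded there, hence compact. *)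
Lemma exists_minimizer (F G : (X -> R) -> R) (B : R) :
  locally_lipschitz F -> locally_lipschitz G ->
  (exists h, G h <= 0) -> (forall h, G h <= 0 -> forall x, `|h x| <= B) ->
  exists h0, G h0 <= 0 /\ forall h, G h <= 0 -> F h0 <= F h.
Proof.
move=> HF HG [h1 Gh1] HB.
pose ofV (v : 'rV[R]_#|X|) : X -> R := fun x => v ord0 (enum_rank x).
pose toV (h : X -> R) : 'rV[R]_#|X| := \row_i h (enum_val i).
have ofVK h : ofV (toV h) = h.
  by apply/funext => x; rewrite /ofV /toV mxE enum_rankK.
have contV (H : (X -> R) -> R) : locally_lipschitz H -> continuous (H \o ofV).
  move=> HH; apply: continuous_locally_lipschitz_rV => v.
  have [L HL] := HH (ofV v).
  exists (`|L| * #|X|%:R); first by rewrite mulr_ge0.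
  move=> w vw.
  have cw x : `|ofV v x - ofV w x| <= `|v - w|.
    by have := coord_le_mx_norm (v - w) (enum_rank x); rewrite !mxE.
  apply: le_trans (HL (ofV w) (fun x => le_trans (cw x) vw)) _.
  apply: le_trans (ler_norm _) _; rewrite normrM (ger0_norm (sumr_ge0 _ _)) //.
  rewrite -mulrA ler_wpM2l //; apply: le_trans (ler_sum _ (fun x _ => cw x)) _.
  by rewrite sumr_const mulr_natl.
pose A := [set v : 'rV[R]_#|X| | (G \o ofV) v <= 0].
have A_closed : closed A.
  apply: (@preimage_closed _ _ (G \o ofV) [set x : R | x <= 0]); last exact: closed_le.
  by move=> v _; apply: contV.
have A_compact : compact A.
  apply: (@subclosed_compact _ A [set v | forall i, `[(- B), B] (v ord0 i)] A_closed).
    exact: (@rV_compact R _ (fun=> `[(- B), B]) (fun=> @segment_compact R _ _)).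
  move=> v /= Av i; move: (HB _ Av (enum_val i)).
  by rewrite /ofV enum_valK /= in_itv /= ler_norml.
have A0 : A !=set0 by exists (toV h1); rewrite /A /= ofVK.
have [c cA cmin] := EVT_min_rV A0 A_compact (continuous_subspaceT (contV F HF)).
exists (ofV c); split; first by move: cA; rewrite inE.
by move=> h Gh; rewrite -(ofVK h); apply: cmin; rewrite inE /A /= ofVK.
Qed.
End FiniteDimensionalMinimum.

Section NormFacts.
Variables (R : realType) (X : finType) (N : (X -> R) -> R).
Hypothesis HN : is_norm N.

Lemma is_norm_ge0 f : 0 <= N f.
Proof. by case: HN. Qed.

Lemma is_norm_eq0 f : N f = 0 -> f = (fun _ => 0).
Proof. by case: HN => _ /(_ f). Qed.

Lemma is_normZ a f : N (fun x => a * f x) = `|a| * N f.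
Proof. by case: HN. Qed.

Lemma is_normD f g : N (fun x => f x + g x) <= N f + N g.
Proof. by case: HN. Qed.

Lemma is_norm0 : N (fun _ => 0) = 0.
Proof.
have -> : (fun _ => 0) = (fun x : X => 0 * (fun _ => 0 : R) x).
  by apply/funext => x; rewrite mul0r.
by rewrite is_normZ normr0 mul0r.
Qed.

Lemma is_normN f : N (fun x => - f x) = N f.
Proof.
rewrite -[RHS]mul1r -normrN1 -is_normZ.
by congr N; apply/funext => x; rewrite mulN1r.
Qed.

Lemma is_norm_sum {I : Type} (s : seq I) (F : I -> X -> R) :
  N (fun y => \sum_(i <- s) F i y) <= \sum_(i <- s) N (F i).
Proof.
elim: s => [|i s IH]; first by under eq_fun do rewrite big_nil; rewrite big_nil is_norm0.
under eq_fun do rewrite big_cons; rewrite big_cons.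
by apply: le_trans (is_normD _ _) _; rewrite lerD2l.
Qed.

Definition ebasis (x : X) : X -> R := fun y => (y == x)%:R.

Lemma is_norm_le_l1 h : N h <= (\sum_x N (ebasis x)) * \sum_x `|h x|.
Proof.
have hE : h = (fun y => \sum_(x <- enum X) h x * ebasis x y).
  apply/funext => y; rewrite big_enum /= (bigD1 y) //= big1 /ebasis ?eqxx ?mulr1 ?addr0 //.
  by move=> x /negbTE; rewrite eq_sym => ->; rewrite mulr0.
rewrite {1}hE; apply: le_trans (is_norm_sum (enum X) (fun x y => h x * ebasis x y)) _.
rewrite big_enum /= mulr_sumr; apply: ler_sum => x _; rewrite is_normZ mulrC ler_wpM2r //.
by rewrite (bigD1 x) //= lerDl sumr_ge0 // => y _; exact: is_norm_ge0.
Qed.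

Lemma is_norm_lipschitz h h' :
  `|N h - N h'| <= (\sum_x N (ebasis x)) * \sum_x `|h x - h' x|.
Proof.
have step a a' : N a - N a' <= (\sum_x N (ebasis x)) * \sum_x `|a x - a' x|.
  have -> : N a = N (fun x => (a x - a' x) + a' x).
    by congr N; apply/funext => x; rewrite subrK.
  by rewrite lerBlDr; apply: le_trans (is_normD _ _) _; rewrite lerD2r is_norm_le_l1.
rewrite ler_norml step andbT lerNl opprB.
have -> : \sum_x `|h x - h' x| = \sum_x `|h' x - h x|.
  by apply: eq_bigr => x _; exact: distrC.
exact: step.
Qed.

Lemma is_norm_sub_locally_lipschitz c :
  locally_lipschitz (fun g => N (fun x => c x - g x)).
Proof.
move=> h; exists (\sum_x N (ebasis x)) => h' _.
apply: le_trans (is_norm_lipschitz _ _) _; rewrite ler_wpM2l ?sumr_ge0 //.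
  by move=> x _; exact: is_norm_ge0.
apply: ler_sum => x _.
have -> : c x - h x - (c x - h' x) = - (h x - h' x) by lra.
by rewrite normrN.
Qed.
End NormFacts.
Arguments ebasis {R X} x.

Section Box.
Variables (R : realType) (X : finType) (b : X -> R).

Definition in_box (g : X -> R) := forall x, 0 <= g x <= b x.

(* The summand at [x] is twice the distance from [g x] to the interval [[0, b x]]. *)
Definition box_excess (g : X -> R) :=
  \sum_x ((`|g x| - g x) + (`|g x - b x| + g x - b x)).

Lemma box_excess_le0P g : box_excess g <= 0 <-> in_box g.
Proof.
have nrm (a : R) : a <= `|a| /\ - a <= `|a|.
  by split; [exact: ler_norm | rewrite -normrN; exact: ler_norm].
split=> [Hg x | Hg]; last first.
  rewrite /box_excess big1 // => x _; have /andP[gx0 gxb] := Hg x.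
  rewrite ger0_norm // ler0_norm ?subr_le0 //; lra.
have t0 y : 0 <= (`|g y| - g y) + (`|g y - b y| + g y - b y).
  by have := nrm (g y); have := nrm (g y - b y); lra.
have excess0 : box_excess g = 0 by apply/le_anti; rewrite Hg sumr_ge0.
have := psumr_eq0P (fun y _ => t0 y) excess0 (i := x) isT.
by have := nrm (g x); have := nrm (g x - b x) => n1 n2 n3; apply/andP; split; lra.
Qed.

Lemma box_excess_locally_lipschitz : locally_lipschitz box_excess.
Proof.
move=> h; exists 2 => h' _.
rewrite /box_excess -sumrB mulr_sumr; apply: le_trans (ler_norm_sum _ _ _) _.
apply: ler_sum => x _.
have := ler_dist_dist (h x) (h' x).
have := ler_dist_dist (h x - b x) (h' x - b x).
have -> : h x - b x - (h' x - b x) = h x - h' x by lra.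
set u := `|h x| - `|h' x|; set v := `|h x - b x| - `|h' x - b x|.
move=> hv hu; have -> : `|h x| - h x + (`|h x - b x| + h x - b x) -
   (`|h' x| - h' x + (`|h' x - b x| + h' x - b x)) = u + v by rewrite /u /v; lra.
by apply: le_trans (ler_normD _ _) _; lra.
Qed.
End Box.

Section BoxDistance.
Local Open Scope classical_set_scope.
Variables (R : realType) (X : finType) (N : (X -> R) -> R) (b : X -> R).
Hypotheses (HN : is_norm N) (b_ge0 : forall x, 0 <= b x).

Definition box_dist (c : X -> R) := inf [set N (fun x => c x - g x) | g in in_box b].

Lemma in_box0 : in_box b (fun _ => 0).
Proof. by move=> x; rewrite lexx b_ge0. Qed.

Lemma in_box_le_sum g x : in_box b g -> `|g x| <= \sum_y b y.
Proof.
move=> /(_ x) /andP[gx0 gxb]; rewrite ger0_norm //; apply: le_trans gxb _.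
by rewrite (bigD1 x) //= lerDl sumr_ge0.
Qed.

Lemma box_dist_le c g : in_box b g -> box_dist c <= N (fun x => c x - g x).
Proof.
move=> Hg; apply: ge_inf; last by exists g.
by exists 0 => _ [g' _ <-]; exact: is_norm_ge0.
Qed.

Lemma box_dist_attained c : exists2 g, in_box b g & N (fun x => c x - g x) = box_dist c.
Proof.
have box_ne : exists h, box_excess b h <= 0.
  by exists (fun _ => 0); apply/box_excess_le0P; exact: in_box0.
have box_bd h : box_excess b h <= 0 -> forall x, `|h x| <= \sum_y b y.
  by move=> /box_excess_le0P h_box x; exact: in_box_le_sum.
have [g0 [g0_excess g0_min]] := exists_minimizer
  (is_norm_sub_locally_lipschitz HN c) (box_excess_locally_lipschitz b) box_ne box_bd.
move/box_excess_le0P: g0_excess => g0_box.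
exists g0 => //; apply/le_anti; rewrite box_dist_le //= andbT.
rewrite /box_dist; apply: lb_le_inf; first by exists (N (fun x => c x - g0 x)), g0.
by move=> _ [g /box_excess_le0P g_box <-]; exact: g0_min.
Qed.

Lemma box_dist_lipschitz c c' : box_dist c <= box_dist c' + N (fun x => c x - c' x).
Proof.
have [g g_box <-] := box_dist_attained c'.
apply: le_trans (box_dist_le c g_box) _.
have -> : (fun x => c x - g x) = (fun x => (c' x - g x) + (c x - c' x)).
  by apply/funext => x; lra.
exact: is_normD.
Qed.

Lemma box_dist_locally_lipschitz : locally_lipschitz box_dist.
Proof.
move=> h; exists (\sum_x N (ebasis x)) => h' _.
have := box_dist_lipschitz h h'; have := box_dist_lipschitz h' h.
have := is_norm_le_l1 HN (fun x => h x - h' x).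
have := is_norm_le_l1 HN (fun x => h' x - h x).
have -> : \sum_x `|h' x - h x| = \sum_x `|h x - h' x|.
  by apply: eq_bigr => x _; exact: distrC.
by rewrite ler_norml; move=> *; apply/andP; split; lra.
Qed.

Lemma box_dist_convex c c' t : 0 <= t <= 1 ->
  box_dist (fun x => c x + t * (c' x - c x)) <= (1 - t) * box_dist c + t * box_dist c'.
Proof.
move=> /andP[t0 t1].
have [g g_box <-] := box_dist_attained c; have [g' g'_box <-] := box_dist_attained c'.
have gt_box : in_box b (fun x => g x + t * (g' x - g x)).
  move=> x; have /andP[? ?] := g_box x; have /andP[? ?] := g'_box x.
  by apply/andP; split; nra.
apply: le_trans (box_dist_le _ gt_box) _.
have -> : (fun x => c x + t * (c' x - c x) - (g x + t * (g' x - g x))) =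
    (fun x => (1 - t) * (c x - g x) + t * (c' x - g' x)).
  by apply/funext => x; lra.
apply: le_trans (is_normD HN _ _) _.
by rewrite !is_normZ // ger0_norm ?subr_ge0 // ger0_norm.
Qed.
End BoxDistance.

Section Projection.
Variables (R : realType) (X : finType).

Lemma le0_of_quadratic_ge (A D : R) :
  0 <= D -> (forall t, 0 < t <= 1 -> 2 * t * A <= t ^+ 2 * D) -> A <= 0.
Proof.
move=> D0 key; rewrite leNgt; apply/negP => A0.
have D1 : 0 < D + 1 by rewrite ltr_wpDl.
pose t := Num.min 1 (A / (D + 1)).
have t0 : 0 < t by rewrite lt_min ltr01 divr_gt0.
have t1 : t <= 1 by rewrite ge_min lexx.
have tD : t * D <= A.
  apply: le_trans (_ : A / (D + 1) * D <= A); first by rewrite ler_wpM2r // ge_min lexx orbT.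
  by rewrite mulrAC ler_pdivrMr //; nra.
have := key t; rewrite t0 t1 => /(_ isT).
by rewrite expr2 -!mulrA [2 * _]mulrC -mulrA ler_pM2l //; lra.
Qed.

Lemma sqdist_locally_lipschitz (f : X -> R) :
  locally_lipschitz (fun c => \sum_x (f x - c x) ^+ 2).
Proof.
move=> h; exists (\sum_x (2 * `|f x - h x|) + 1) => h' hh'.
rewrite -sumrB mulr_sumr; apply: le_trans (ler_norm_sum _ _ _) _.
apply: ler_sum => x _.
have -> : (f x - h x) ^+ 2 - (f x - h' x) ^+ 2 =
    (h' x - h x) * (2 * (f x - h x) + (h x - h' x)) by rewrite !expr2; lra.
rewrite normrM distrC mulrC ler_wpM2r //.
apply: le_trans (ler_normD _ _) _.
rewrite normrM (ger0_norm (_ : 0 <= 2 :> R)) //.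
have : 2 * `|f x - h x| <= \sum_y (2 * `|f y - h y|).
  by rewrite (bigD1 x) //= lerDl sumr_ge0 // => y _; rewrite mulr_ge0.
by have := hh' x; lra.
Qed.

(* [phi] is [f - p], where [p] is the Euclidean projection of [f] onto the
   compact convex set [G <= 0]. *)
Lemma projection_separates (G : (X -> R) -> R) (B : R) (f : X -> R) :
  locally_lipschitz G -> (exists c, G c <= 0) ->
  (forall c, G c <= 0 -> forall x, `|c x| <= B) ->
  (forall c c' t, G c <= 0 -> G c' <= 0 -> 0 <= t <= 1 ->
     G (fun x => c x + t * (c' x - c x)) <= 0) ->
  0 < G f ->
  exists phi, 0 < \sum_x phi x ^+ 2 /\ forall c, G c <= 0 ->
    \sum_x c x * phi x + \sum_x phi x ^+ 2 <= \sum_x f x * phi x.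
Proof.
move=> G_lip G_ne G_bd G_convex Gf.
have [p [Gp p_min]] := exists_minimizer (sqdist_locally_lipschitz f) G_lip G_ne G_bd.
exists (fun x => f x - p x); split.
  rewrite lt_def sumr_ge0 ?andbT // => [|x _]; last exact: sqr_ge0.
  apply/eqP => /psumr_eq0P fp; suff fpE : f = p by move: Gf; rewrite fpE ltNge Gp.
  apply/funext => x; have /eqP := fp (fun y _ => sqr_ge0 _) x isT.
  by rewrite sqrf_eq0 subr_eq0 => /eqP.
move=> c Gc.
suff : \sum_x (f x - p x) * (c x - p x) <= 0.
  have -> : \sum_x (f x - p x) * (c x - p x) =
      \sum_x c x * (f x - p x) - \sum_x p x * (f x - p x).
    by rewrite -sumrB; apply: eq_bigr => x _; lra.
  have -> : \sum_x f x * (f x - p x) =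
      \sum_x p x * (f x - p x) + \sum_x (f x - p x) ^+ 2.
    by rewrite -big_split; apply: eq_bigr => x _ /=; rewrite expr2; lra.
  lra.
apply: (le0_of_quadratic_ge (sumr_ge0 _ (fun x _ => sqr_ge0 (c x - p x)))) => t /andP[t0 t1].
have t01 : 0 <= t <= 1 by rewrite (ltW t0) t1.
have := p_min _ (G_convex _ _ _ Gp Gc t01).
have -> : \sum_x (f x - (p x + t * (c x - p x))) ^+ 2 = \sum_x (f x - p x) ^+ 2
   - 2 * t * \sum_x (f x - p x) * (c x - p x) + t ^+ 2 * \sum_x (c x - p x) ^+ 2.
  rewrite !mulr_sumr -sumrB -big_split /=.
  by apply: eq_bigr => x _; rewrite !expr2; lra.
lra.
Qed.
End Projection.

Section DualNorm.
Local Open Scope classical_set_scope.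
Variables (R : realType) (X : finType) (N : (X -> R) -> R).
Hypotheses (HN : is_norm N) (HM : is_norm (dual_norm N)).

Lemma ipZl a (f g : X -> R) : ip (fun x => a * f x) g = a * ip f g.
Proof.
rewrite /ip mulrCA; congr (_ * _); rewrite mulr_sumr.
by apply: eq_bigr => x _; rewrite mulrA.
Qed.

Lemma ipC (f g : X -> R) : ip f g = ip g f.
Proof. by rewrite /ip; congr (_ * _); apply: eq_bigr => x _; rewrite mulrC. Qed.

Lemma ip_ebasis (h : X -> R) x : ip h (ebasis x) = #|X|%:R^-1 * h x.
Proof.
rewrite /ip (bigD1 x) //= big1 /ebasis ?eqxx ?mulr1 ?addr0 //.
by move=> y /negbTE ->; rewrite mulr0.
Qed.

(* [sup] is [0] on unbounded sets, so boundedness has to come from [HM]. *)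
Lemma dual_norm_has_sup phi : has_sup [set ip f phi | f in [set f | N f <= 1]].
Proof.
split; first by exists (ip (fun _ => 0) phi), (fun _ => 0) => //=; rewrite is_norm0.
apply/not_notP => unbounded.
have /(is_norm_eq0 HM) phi0 : dual_norm N phi = 0 by rewrite /dual_norm sup_out // => -[].
apply: unbounded; exists 0 => _ [f _ <-].
by rewrite phi0 /ip big1 ?mulr0 // => x _ /=; rewrite mulr0.
Qed.

Lemma dual_norm_le phi K :
  (forall h, N h <= 1 -> ip h phi <= K) -> dual_norm N phi <= K.
Proof.
move=> H; apply: ge_sup; first by case: (dual_norm_has_sup phi).
by move=> _ [h Nh <-]; exact: H.
Qed.

Lemma ip_le_dual_norm h phi : ip h phi <= N h * dual_norm N phi.
Proof.
have [/(is_norm_eq0 HN) -> | Nh0] := eqVneq (N h) 0.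
  by rewrite (is_norm0 HN) mul0r /ip big1 ?mulr0 // => x _ /=; rewrite mul0r.
have Nh_gt0 : 0 < N h by rewrite lt_def Nh0 is_norm_ge0.
rewrite -ler_pdivrMl // -ipZl /dual_norm; apply: (@sup_upper_bound _ _ (dual_norm_has_sup phi)).
exists (fun x => (N h)^-1 * h x) => //=.
by rewrite is_normZ // ger0_norm ?mulVf // invr_ge0 ltW.
Qed.

Lemma sum_mul_le_dual_norm h phi :
  \sum_x h x * phi x <= #|X|%:R * (N h * dual_norm N phi).
Proof.
have [X0|n_gt0] := posnP #|X|.
  by rewrite X0 mul0r big1 // => x; move: (card0_eq X0 x); rewrite !inE.
by rewrite -ler_pdivrMl ?ltr0n //; exact: ip_le_dual_norm.
Qed.

Lemma coord_le_norm : exists2 c0, 0 <= c0 & forall h x, `|h x| <= c0 * N h.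
Proof.
exists (#|X|%:R * \sum_y dual_norm N (ebasis y)).
  by rewrite mulr_ge0 // sumr_ge0 // => y _; exact: is_norm_ge0.
move=> h x; have n_gt0 : 0 < #|X|%:R :> R by rewrite ltr0n; apply/card_gt0P; exists x.
have coord_le h' : h' x <= #|X|%:R * dual_norm N (ebasis x) * N h'.
  have := ip_le_dual_norm h' (ebasis x).
  by rewrite ip_ebasis ler_pdivrMl // mulrA mulrAC.
have M_le : dual_norm N (ebasis x) <= \sum_y dual_norm N (ebasis y).
  by rewrite (bigD1 x) //= lerDl sumr_ge0 // => y _; exact: is_norm_ge0.
have bound h' : h' x <= #|X|%:R * (\sum_y dual_norm N (ebasis y)) * N h'.
  by apply: le_trans (coord_le h') _; rewrite ler_wpM2r ?is_norm_ge0 // ler_wpM2l // ltW.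
rewrite ler_norml bound andbT lerNl.
by have := bound (fun y => - h y); rewrite is_normN.
Qed.

Lemma coord_le_dual_norm x : exists K, forall h, h x <= K * dual_norm N h.
Proof.
have n_gt0 : 0 < #|X|%:R :> R by rewrite ltr0n; apply/card_gt0P; exists x.
exists (#|X|%:R * N (ebasis x)) => h.
have := ip_le_dual_norm (ebasis x) h.
by rewrite ipC ip_ebasis ler_pdivrMl // mulrA.
Qed.
End DualNorm.

Lemma bernoulli_ineq (R : realDomainType) (r : R) k : 1 <= r -> 1 + k%:R * (r - 1) <= r ^+ k.
Proof.
move=> r1; elim: k => [|k IH]; first by rewrite mul0r addr0 expr0.
rewrite exprS; apply: le_trans (_ : r * (1 + k%:R * (r - 1)) <= _); last first.
  by rewrite ler_wpM2l // (le_trans _ r1).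
have : 0 <= (r - 1) ^+ 2 * k%:R by rewrite mulr_ge0 ?sqr_ge0.
by rewrite -natr1 expr2; nra.
Qed.

Lemma le1_of_exprn_bounded (R : realType) (r K : R) : (forall k, r ^+ k <= K) -> r <= 1.
Proof.
move=> bounded; rewrite leNgt; apply/negP => r_gt1.
have r1_gt0 : 0 < r - 1 by rewrite subr_gt0.
pose j := Num.bound (`|K| / (r - 1)).
have : `|K| / (r - 1) < j%:R by apply: archi_boundP; rewrite divr_ge0 // ltW.
rewrite ltr_pdivrMr // => Kj.
have := bernoulli_ineq j (ltW r_gt1); have := bounded j; have := ler_norm K.
lra.
Qed.

Section AlgebraNorm.
Variables (R : realType) (X : finType) (M : (X -> R) -> R).
Hypothesis HA : is_algebra_norm M.

Let HM : is_norm M. Proof. by case: HA. Qed.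

Lemma algebra_normX psi k : M (fun x => psi x ^+ k) <= M psi ^+ k.
Proof.
case: HA => _ Msub M1; elim: k => [|k IH].
  by under eq_fun do rewrite expr0; rewrite M1 expr0.
under eq_fun do rewrite exprS.
by apply: le_trans (Msub _ _) _; rewrite exprS ler_wpM2l ?is_norm_ge0.
Qed.

Lemma algebra_norm_horner (p : {poly R}) psi C :
  M psi <= C -> M (fun x => p.[psi x]) <= RP p C.
Proof.
move=> MC; under eq_fun do rewrite horner_coef.
apply: le_trans (is_norm_sum HM _ (fun i y => p`_(val i) * psi y ^+ val i)) _.
apply: ler_sum => i _; rewrite is_normZ // ler_wpM2l //.
apply: le_trans (algebra_normX _ _) _.
have M_ge0 := is_norm_ge0 HM psi.
by apply: lerXn2r => //; rewrite nnegrE //; exact: le_trans M_ge0 MC.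
Qed.

(* Spectral radius: [|psi x|^k <= K M(psi)^k] for all [k] forces [|psi x| <= M(psi)]. *)
Lemma abs_le_algebra_norm :
  (forall x, exists K, forall h, h x <= K * M h) -> forall psi x, `|psi x| <= M psi.
Proof.
move=> coord_le psi x; have [K HK] := coord_le x.
have K_ge1 : 1 <= K by have := HK (fun _ => 1); case: HA => _ _ ->; rewrite mulr1.
have powers k : `|psi x| ^+ k <= K * M psi ^+ k.
  rewrite -normrX; apply: le_trans (_ : K * M (fun y => psi y ^+ k) <= _).
    by rewrite ler_norml HK andbT lerNl -(is_normN HM); exact: HK.
  by rewrite ler_wpM2l ?algebra_normX // (le_trans ler01).
have [/(is_norm_eq0 HM) -> | M0] := eqVneq (M psi) 0; first by rewrite normr0 (is_norm0 HM).
have M_gt0 : 0 < M psi by rewrite lt_def M0 is_norm_ge0.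
rewrite -[leRHS]mul1r -ler_pdivrMr //; apply: (le1_of_exprn_bounded (K := K)) => k.
by rewrite expr_div_n ler_pdivrMr ?exprn_gt0.
Qed.
End AlgebraNorm.

Section FarFromBox.
Variables (R : realType) (X : finType) (N : (X -> R) -> R) (b f : X -> R) (eta : R).
Hypotheses (HN : is_norm N) (HM : is_norm (dual_norm N)).
Hypotheses (b_ge0 : forall x, 0 <= b x) (eta_gt0 : 0 < eta).
Hypothesis far : forall g, in_box b g -> eta < N (fun x => f x - g x).

(* The [eta]-neighbourhood [box_dist <= eta] of the box is compact and convex. *)
Lemma far_from_box_separation : exists phi, 0 < \sum_x phi x ^+ 2 /\
  forall g h, in_box b g -> N h <= eta ->
    \sum_x (g x + h x) * phi x + \sum_x phi x ^+ 2 <= \sum_x f x * phi x.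
Proof.
have [c0 c0_ge0 coord_le] := coord_le_norm HN HM.
pose G c := box_dist N b c - eta.
have G_lip : locally_lipschitz G.
  move=> h; have [L HL] := box_dist_locally_lipschitz HN b_ge0 h.
  by exists L => h' /HL; rewrite /G opprB addrA subrK.
have G_ne : exists c, G c <= 0.
  exists (fun _ => 0); rewrite /G subr_le0; apply: le_trans (box_dist_le HN _ (in_box0 b_ge0)) _.
  by under eq_fun do rewrite subr0; rewrite (is_norm0 HN) ltW.
have G_bd c : G c <= 0 -> forall x, `|c x| <= \sum_y b y + c0 * eta.
  rewrite /G subr_le0 => c_near x; have [g g_box Eg] := box_dist_attained HN b_ge0 c.
  have := in_box_le_sum b_ge0 x g_box; have := ler_normD (c x - g x) (g x); rewrite subrK.
  have : `|c x - g x| <= c0 * eta.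
    by apply: le_trans (coord_le (fun y => c y - g y) x) _; rewrite ler_wpM2l // Eg.
  lra.
have G_convex c c' t : G c <= 0 -> G c' <= 0 -> 0 <= t <= 1 ->
    G (fun x => c x + t * (c' x - c x)) <= 0.
  rewrite /G !subr_le0 => Gc Gc' /[dup] t01 /andP[t0 t1].
  apply: le_trans (box_dist_convex HN b_ge0 c c' t01) _; nra.
have Gf : 0 < G f.
  rewrite /G subr_gt0; have [g g_box <-] := box_dist_attained HN b_ge0 f; exact: far.
have [phi [phi_gt0 sep]] := projection_separates G_lip G_ne G_bd G_convex Gf.
exists phi; split=> // g h g_box Nh; apply: sep; rewrite /G subr_le0.
apply: le_trans (box_dist_le HN _ g_box) _.
by under eq_fun do rewrite addrC addKr.
Qed.

Lemma far_from_box_dual_bound : exists phi, 0 < \sum_x phi x ^+ 2 /\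
  forall g, in_box b g ->
    #|X|%:R * eta * dual_norm N phi + \sum_x phi x ^+ 2 <= \sum_x (f x - g x) * phi x.
Proof.
have [phi [phi_gt0 sep]] := far_from_box_separation.
exists phi; split=> // g g_box.
have [x _] : exists x : X, true.
  apply/not_existsP => X0; move: phi_gt0; rewrite big_pred0 ?ltxx // => x.
  by apply/negP => _; apply: (X0 x).
have n_gt0 : 0 < #|X|%:R :> R by rewrite ltr0n; apply/card_gt0P; exists x.
set S := \sum_x (f x - g x) * phi x.
suff : dual_norm N phi <= (S - \sum_x phi x ^+ 2) / (#|X|%:R * eta).
  by rewrite ler_pdivlMr ?mulr_gt0 //; lra.
apply: (dual_norm_le HN HM) => h Nh.
have eta_h : N (fun x => eta * h x) <= eta.
  rewrite (is_normZ HN) ger0_norm; last exact: ltW.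
  by rewrite -[X in _ <= X]mulr1 ler_wpM2l // ltW.
have := sep g _ g_box eta_h.
have -> : \sum_x (g x + eta * h x) * phi x = \sum_x f x * phi x - S + eta * \sum_x h x * phi x.
  by rewrite /S -sumrB mulr_sumr -big_split; apply: eq_bigr => y _ /=; lra.
rewrite /ip ler_pdivlMr ?mulr_gt0 // mulrAC mulrA mulVf ?gt_eqF // mul1r; lra.
Qed.

Lemma far_from_box_witness : exists psi, dual_norm N psi = eta^-1 /\
  forall g, in_box b g -> #|X|%:R < \sum_x (f x - g x) * psi x.
Proof.
have [phi [phi_gt0 bound]] := far_from_box_dual_bound.
set m := dual_norm N phi.
have m_gt0 : 0 < m.
  rewrite lt_def is_norm_ge0 // andbT; apply/eqP => /(is_norm_eq0 HM) phi0.
  by move: phi_gt0; rewrite phi0 big1 ?ltxx // => x _; rewrite expr0n.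
have em_gt0 : 0 < eta * m by rewrite mulr_gt0.
exists (fun x => (eta * m)^-1 * phi x); split.
  rewrite (is_normZ HM) ger0_norm ?invr_ge0 ?(ltW em_gt0) // invfM -mulrA.
  by rewrite mulVf ?mulr1 // gt_eqF.
move=> g g_box; have := bound g g_box.
have -> : \sum_x (f x - g x) * ((eta * m)^-1 * phi x) =
    (eta * m)^-1 * \sum_x (f x - g x) * phi x.
  by rewrite mulr_sumr; apply: eq_bigr => x _; rewrite mulrCA.
rewrite -/m ltr_pdivlMl //; lra.
Qed.
End FarFromBox.

Lemma RP_ge0 (R : realType) (p : {poly R}) C : 0 <= C -> 0 <= RP p C.
Proof. by move=> C0; apply: sumr_ge0 => k _; rewrite mulr_ge0 ?exprn_ge0. Qed.

Lemma rho_near_optimal (R : realType) (C d : R) (J : R -> R) :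
  0 <= C -> 0 < rho C d J ->
  exists2 p : {poly R}, (forall y, - C <= y <= C -> `|p.[y] - J y| <= d) &
    RP p C <= rho C d J.
Proof.
move=> C0; rewrite /rho; set S := (X in inf X); move=> I_gt0.
have I_pos : 0 < inf S by rewrite -(pmulr_rgt0 _ (ltr0n _ 2)).
have S_inf : has_inf S.
  split; last by exists 0 => _ [p _ <-]; exact: RP_ge0.
  by apply/not_notP => S0; move: I_pos; rewrite inf_out ?ltxx // => -[].
have [_ [p p_approx <-] p_lt] := inf_adherent I_pos S_inf.
by exists p => //; rewrite mulr_natl mulr2n ltW.
Qed.

Lemma sum_le_card (R : realType) (X : finType) (mu : X -> R) :
  (forall x, 0 <= mu x) -> norm1 mu <= 1 -> \sum_x mu x <= #|X|%:R.
Proof.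
move=> mu_ge0; have [X0 _|n_gt0] := posnP #|X|.
  by rewrite X0 big1 // => x; move: (card0_eq X0 x); rewrite !inE.
rewrite /norm1 ler_pdivrMl ?ltr0n // mulr1.
by under eq_bigr do rewrite ger0_norm //.
Qed.

(* Pointwise inequality behind testing with [g = nu 1_{psi > 0}]: here [a, m, v,
   y, q] stand for [f x, mu x, nu x, psi x, P(psi x)]. *)
Lemma pos_part_test_le (R : realType) (a m v y q d : R) :
  0 <= a <= m -> 0 <= v -> `|q - Jpos y| <= d ->
  (a - (if 0 < y then v else 0)) * y <= (m - v) * q + (m + v) * d.
Proof.
move=> /andP[a0 am] v0; rewrite /Jpos ler_norml => /andP[q1 q2].
case: ifP => y0.
  by rewrite gtr0_norm // in q1 q2; nra.
by move/negbT: y0; rewrite -leNgt => y0; rewrite ler0_norm // in q1 q2; nra.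
Qed.

Lemma box_approximation (R : realType) (X : finType) (N : (X -> R) -> R)
    (mu nu f : X -> R) (eta delta : R) (p : {poly R}) :
  is_norm N -> is_algebra_norm (dual_norm N) ->
  (forall x, 0 <= nu x) -> norm1 mu <= 1 -> norm1 nu <= 1 ->
  0 < eta -> 0 < delta -> delta < 1 ->
  (forall y, - eta^-1 <= y <= eta^-1 -> `|p.[y] - Jpos y| <= delta / 4) ->
  N (fun x => mu x - nu x) * RP p eta^-1 <= delta / 2 ->
  in_box mu f -> exists g, in_box nu g /\ N (fun x => f x - g x) <= eta.
Proof.
move=> HN HA nu_ge0 mu1 nu1 eta_gt0 delta_gt0 delta_lt1 p_approx eps_le f_box.
have HM : is_norm (dual_norm N) by case: HA.
have mu_ge0 x : 0 <= mu x by have /andP[/le_trans] := f_box x; apply.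
apply/not_existsP => no_g.
have far g : in_box nu g -> eta < N (fun x => f x - g x).
  by move=> g_box; rewrite ltNge; apply/negP => fg; apply: (no_g g).
have [psi [M_psi psi_test]] := far_from_box_witness HN HM nu_ge0 eta_gt0 far.
have psi_le x : - eta^-1 <= psi x <= eta^-1.
  by rewrite -ler_norml -M_psi (abs_le_algebra_norm HA (coord_le_dual_norm HN HM)).
pose g x := if 0 < psi x then nu x else 0.
have g_box : in_box nu g by move=> x; rewrite /g; case: ifP; rewrite ?lexx nu_ge0.
have holder : \sum_x (mu x - nu x) * p.[psi x] <= #|X|%:R * (delta / 2).
  have MQ : dual_norm N (fun x => p.[psi x]) <= RP p eta^-1.
    by apply: algebra_norm_horner; rewrite ?M_psi.
  apply: le_trans (sum_mul_le_dual_norm HN HM _ _) _; rewrite ler_wpM2l //.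
  by apply: le_trans eps_le; rewrite ler_wpM2l ?is_norm_ge0.
have test_le : \sum_x (f x - g x) * psi x <=
    \sum_x (mu x - nu x) * p.[psi x] + (\sum_x mu x + \sum_x nu x) * (delta / 4).
  rewrite mulrDl !mulr_suml -!big_split /=; apply: ler_sum => x _.
  apply: le_trans (pos_part_test_le (f_box x) (nu_ge0 x) (p_approx _ (psi_le x))) _.
  by rewrite /g; lra.
have := sum_le_card mu_ge0 mu1; have := sum_le_card nu_ge0 nu1.
have := psi_test g g_box; have : (0 : R) <= #|X|%:R by [].
nra.
Qed.

Theorem theorem4p4 (R : realType) (X : finType) (mu nu : X -> R)
  (Hmu0 : forall x, 0 <= mu x) (Hnu0 : forall x, 0 <= nu x)
  (Hmu1 : norm1 mu <= 1) (Hnu1 : norm1 nu <= 1)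
  (eta delta : R) (Heta : 0 < eta) (Hdelta : 0 < delta) (Hdelta1 : delta < 1)
  (N : (X -> R) -> R) (HN : is_norm N) (HNd : is_algebra_norm (dual_norm N))
  (Hmunu : N (fun x => mu x - nu x)
           <= delta / (2 * rho eta^-1 (delta / 4) (@Jpos R))) :
  forall f : X -> R, (forall x, 0 <= f x <= mu x) ->
  exists g : X -> R, (forall x, 0 <= g x <= (1 - delta)^-1 * nu x) /\
                     N (fun x => f x - g x) <= eta.
Proof.
move=> f f_box.
suff [g [g_box fg_le]] : exists g, in_box nu g /\ N (fun x => f x - g x) <= eta.
  exists g; split=> // x; have /andP[-> gx_le] := g_box x.
  apply: le_trans gx_le _; rewrite ler_peMl // invf_ge1 ?subr_gt0 //; lra.
have [/(is_norm_eq0 HN) mu_nu | Nmunu_neq0] := eqVneq (N (fun x => mu x - nu x)) 0.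
  exists f; split.
    by move=> x; have /eqP := congr1 (@^~ x) mu_nu; rewrite subr_eq0 => /eqP <-.
  by under eq_fun do rewrite subrr; rewrite (is_norm0 HN) ltW.
set rho0 := rho _ _ _ in Hmunu.
have Nmunu_gt0 : 0 < N (fun x => mu x - nu x) by rewrite lt_def Nmunu_neq0 is_norm_ge0.
have rho0_gt0 : 0 < rho0.
  rewrite ltNge; apply/negP => rho0_le0; move: Hmunu; rewrite leNgt => /negP; apply.
  by apply: le_lt_trans Nmunu_gt0; rewrite pmulr_rle0 // invr_le0 pmulr_rle0.
have C_ge0 : 0 <= eta^-1 by rewrite invr_ge0 ltW.
have [p p_approx RP_le] := rho_near_optimal C_ge0 rho0_gt0.
apply: (box_approximation HN HNd Hnu0 Hmu1 Hnu1 Heta Hdelta Hdelta1 p_approx _ f_box).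
apply: le_trans (_ : delta / (2 * rho0) * rho0 <= _).
  by apply: ler_pM => //; rewrite ?is_norm_ge0 ?RP_ge0 // invr_ge0 ltW.
by rewrite invfM -!mulrA mulVf ?mulr1 // gt_eqF.
Qed.
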